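(* Let $\mathbb F_q$ be a finite field, let $B \subseteq \mathbb F_q^m$ with $r := \mathrm{rank}_{\mathrm{aff}}(B) \geq 1$, and let $\mathcal F$ be any family of affine configurations (subsets of finite-dimensional vector spaces over $\mathbb F_q$). Let $n \geq r$, $N = q^n$, and let $\alpha$ be defined by $\mathrm{ex}_{\mathrm{aff}}(n, B \times \mathcal F) = \alpha N$. Let $c(B,n,\alpha)$ denote the minimum, over all $A \subseteq \mathbb F_q^n$ with $|A| = \alpha N$, of the number of non-degenerate affine homomorphisms $B \to A$. Then \[c(B,n,\alpha) \leq q^{r-1} N^{r-1}\, \mathrm{ex}_{\mathrm{aff}}(n-r+1, \mathcal F).\]
   Context: An affine relation on $x_1,\ldots,x_k$ is an equation $\sum_i \lambda_i x_i = 0$ with $\lambda_i \in \mathbb F_q$, $\sum_i \lambda_i = 0$; a set is affinely independent if it has no such relation with some $\lambda_i \neq 0$, and $\mathrm{rank}_{\mathrm{aff}}(B)$ is the size of a maximal affinely independent subset of $B$. For $B \subseteq \mathbb F_q^m$, $A \subseteq \mathbb F_q^n$, an affine homomorphism $B \to A$ is a map extending to an affine map $\mathbb F_q^m \to \mathbb F_q^n$; it is non-degenerate if it is injective and its inverse on the image is also an affine homomorphism. $A$ contains an affine copy of $B$ if there is a non-degenerate affine homomorphism $B \to A$. For a family $\mathcal B$ of configurations, $\mathrm{ex}_{\mathrm{aff}}(n,\mathcal B)$ is the maximum size of a subset of $\mathbb F_q^n$ containing no affine copy of any member of $\mathcal B$. For $B \subseteq \mathbb F_q^m$ and $F \subseteq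 \mathbb F_q^{k}$, $B \times F = \{(x,y) \in \mathbb F_q^{m+k} : x \in B, y \in F\}$, and $B \times \mathcal F := \{B \times F : F \in \mathcal F\}$. *)

(* Vectors of F_q^m are row vectors 'rV[F]_m over a finite field F (q = #|F|). *)
From HB Require Import structures.
From mathcomp Require Import all_boot all_order all_algebra.
Set Implicit Arguments. Unset Strict Implicit. Unset Printing Implicit Defensive.
Import Order.TTheory GRing.Theory.
Local Open Scope ring_scope.

Definition affine_on (F : finFieldType) (m n : nat) (B : {set 'rV[F]_m})
  (g : 'rV[F]_m -> 'rV[F]_n) : bool :=
  [exists M : 'M[F]_(m, n), exists v : 'rV[F]_n, [forall x in B, g x == x *m M + v]].

Definition nd_hom (F : finFieldType) (m n : nat) (B : {set 'rV[F]_m})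
  (A : {set 'rV[F]_n}) (g : 'rV[F]_m -> 'rV[F]_n) : bool :=
  [&& affine_on B g,
      [forall x in B, g x \in A],
      [forall x in B, forall y in B, (g x == g y) ==> (x == y)] &
      [exists M' : 'M[F]_(n, m), exists v' : 'rV[F]_m,
         [forall x in B, x == g x *m M' + v']]].

Definition contains_copy (F : finFieldType) (n k : nat) (A : {set 'rV[F]_n})
  (C : {set 'rV[F]_k}) : bool :=
  [exists g : {ffun 'rV[F]_k -> 'rV[F]_n}, nd_hom C A g].

(* number of non-degenerate affine homomorphisms B -> A (maps on B are encoded
   as functions on F^m that vanish outside B) *)
Definition nd_count (F : finFieldType) (m n : nat) (B : {set 'rV[F]_m})
  (A : {set 'rV[F]_n}) : nat :=
  #|[set g : {ffun 'rV[F]_m -> 'rV[F]_n} |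
       [forall x in ~: B, g x == 0] && nd_hom B A g]|.

Definition config (F : finFieldType) := {k : nat & {set 'rV[F]_k}}.

Definition prod_set (F : finFieldType) (m k : nat) (B : {set 'rV[F]_m})
  (S : {set 'rV[F]_k}) : {set 'rV[F]_(m + k)} :=
  [set row_mx x y | x in B, y in S].

Definition prod_config (F : finFieldType) (m : nat) (B : {set 'rV[F]_m})
  (c : config F) : config F :=
  existT (fun k => {set 'rV[F]_k}) (m + projT1 c)%N (prod_set B (projT2 c)).

Definition prod_family (F : finFieldType) (m : nat) (B : {set 'rV[F]_m})
  (Fam : config F -> Prop) : config F -> Prop :=
  fun c => exists c', Fam c' /\ c = prod_config B c'.

Definition fam_free (F : finFieldType) (n : nat) (Fam : config F -> Prop)
  (A : {set 'rV[F]_n}) : Prop :=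
  forall c, Fam c -> ~~ contains_copy A (projT2 c).

(* is_ex_aff n Fam e  <->  ex_aff(n, Fam) = e  (e is the maximum size of a Fam-free subset of F^n) *)
Definition is_ex_aff (F : finFieldType) (n : nat) (Fam : config F -> Prop) (e : nat) : Prop :=
  (exists A : {set 'rV[F]_n}, fam_free Fam A /\ #|A| = e) /\
  (forall A : {set 'rV[F]_n}, fam_free Fam A -> (#|A| <= e)%N).

Definition aff_indep (F : finFieldType) (m : nat) (S : {set 'rV[F]_m}) : bool :=
  [forall lam : {ffun 'rV[F]_m -> F},
     ((\sum_(x in S) lam x == 0) && (\sum_(x in S) lam x *: x == 0))
       ==> [forall x in S, lam x == 0]].

Definition rank_aff (F : finFieldType) (m : nat) (B : {set 'rV[F]_m}) : nat :=
  (\max_(S : {set 'rV[F]_m} | (S \subset B) && aff_indep S) #|S|)%N.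

(* c(B, n, alpha) with alpha N = e : minimum over |A| = e of nd_count B A
   (the default of the min is an upper bound for every nd_count) *)
Definition c_min (F : finFieldType) (m : nat) (B : {set 'rV[F]_m}) (n e : nat) : nat :=
  \big[minn/#|{ffun 'rV[F]_m -> 'rV[F]_n}|]_(A : {set 'rV[F]_n} | #|A| == e) nd_count B A.

(* Fix a maximal affinely independent subset S of B, |S| = r, and s0 in S; every
   point of B is an affine combination of S.  A non-degenerate affine homomorphism
   g : B -> A is therefore determined by its difference matrix K, with rows g s - g s0
   (s in S, s <> s0), which takes at most q^(n(r-1)) values, together with a
   translation: the homomorphisms with difference matrix K are the g1 + t with t in
   T = {t | g1(B) + t is contained in A}.  Since g1 is non-degenerate, K has rank r - 1;
   complete it by L to a basis of F_q^n and write t = aK + uL.  For each a, the slice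
   {u | aK + uL in T} of F_q^(n-r+1) contains no affine copy of a member C of the
   family: a copy y |-> u_y would give the affine copy (x, y) |-> g1 x + aK + u_y L of
   B x C in A.  So each of the q^(r-1) slices has at most ex_aff(n-r+1, Fam) points. *)

From mathcomp Require Import all_boot all_order all_algebra.
From mathcomp Require Import zify.
Set Implicit Arguments. Unset Strict Implicit. Unset Printing Implicit Defensive.
Import Order.TTheory GRing.Theory.
Local Open Scope ring_scope.

Section AffineMaps.
Variable F : fieldType.

Definition is_affine a b (f : 'rV[F]_a -> 'rV[F]_b) : Prop :=
  exists (M : 'M[F]_(a, b)) (v : 'rV[F]_b), forall w, f w = w *m M + v.

Lemma affine_id a : is_affine (fun w : 'rV[F]_a => w).
Proof. by exists 1%:M, 0 => w; rewrite mulmx1 addr0. Qed.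

Lemma affine_cst a b (c : 'rV[F]_b) : is_affine (fun _ : 'rV[F]_a => c).
Proof. by exists 0, c => w; rewrite mulmx0 add0r. Qed.

Lemma affineD a b (f g : 'rV[F]_a -> 'rV[F]_b) :
  is_affine f -> is_affine g -> is_affine (fun w => f w + g w).
Proof.
move=> [M1 [v1 Hf]] [M2 [v2 Hg]]; exists (M1 + M2), (v1 + v2) => w.
by rewrite Hf Hg mulmxDr addrACA.
Qed.

Lemma affineN a b (f : 'rV[F]_a -> 'rV[F]_b) : is_affine f -> is_affine (fun w => - f w).
Proof. by move=> [M [v Hf]]; exists (- M), (- v) => w; rewrite Hf mulmxN opprD. Qed.

Lemma affineMr a b c (f : 'rV[F]_a -> 'rV[F]_b) (N : 'M[F]_(b, c)) :
  is_affine f -> is_affine (fun w => f w *m N).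
Proof.
by move=> [M [v Hf]]; exists (M *m N), (v *m N) => w; rewrite Hf mulmxDl mulmxA.
Qed.

Lemma affine_comp a b c (f : 'rV[F]_a -> 'rV[F]_b) (g : 'rV[F]_b -> 'rV[F]_c) :
  is_affine f -> is_affine g -> is_affine (fun w => g (f w)).
Proof.
move=> [M1 [v1 Hf]] [M2 [v2 Hg]]; exists (M1 *m M2), (v1 *m M2 + v2) => w.
by rewrite Hg Hf mulmxDl mulmxA addrA.
Qed.

Lemma affine_row_mx a b1 b2 (f : 'rV[F]_a -> 'rV[F]_b1) (g : 'rV[F]_a -> 'rV[F]_b2) :
  is_affine f -> is_affine g -> is_affine (fun w => row_mx (f w) (g w)).
Proof.
move=> [M1 [v1 Hf]] [M2 [v2 Hg]]; exists (row_mx M1 M2), (row_mx v1 v2) => w.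
by rewrite Hf Hg mul_mx_row add_row_mx.
Qed.

Lemma affine_lsubmx a1 a2 : is_affine (@lsubmx F 1 a1 a2).
Proof.
exists (col_mx 1%:M 0), 0 => w.
by rewrite -[in RHS](hsubmxK w) mul_row_col mulmx1 mulmx0 !addr0.
Qed.

Lemma affine_rsubmx a1 a2 : is_affine (@rsubmx F 1 a1 a2).
Proof.
exists (col_mx 0 1%:M), 0 => w.
by rewrite -[in RHS](hsubmxK w) mul_row_col mulmx1 mulmx0 add0r addr0.
Qed.

Lemma affine_comb a b (f : 'rV[F]_a -> 'rV[F]_b) (I : finType) (P : pred I)
    (mu : I -> F) (x : I -> 'rV[F]_a) :
  is_affine f -> \sum_(i | P i) mu i = 1 ->
  f (\sum_(i | P i) mu i *: x i) = \sum_(i | P i) mu i *: f (x i).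
Proof.
move=> [M [v Hf]] mu1; rewrite Hf mulmx_suml.
under [RHS]eq_bigr do rewrite Hf scalerDr scalemxAl.
by rewrite big_split /= -scaler_suml mu1 scale1r.
Qed.

End AffineMaps.

Lemma c_min_le (F : finFieldType) m n (B : {set 'rV[F]_m}) (A : {set 'rV[F]_n}) :
  (c_min B n #|A| <= nd_count B A)%N.
Proof. by rewrite /c_min -minEnat -leEnat; apply: bigmin_le_cond. Qed.

Section AffineIndependence.
Variables (F : finFieldType) (m : nat).
Implicit Types (B S : {set 'rV[F]_m}) (b : 'rV[F]_m).

Lemma affine_onP n B (g : 'rV[F]_m -> 'rV[F]_n) :
  reflect (exists2 f, is_affine f & {in B, g =1 f}) (affine_on B g).
Proof.
apply: (iffP existsP) => [[M /existsP[v /forall_inP Hg]]|[f [M [v Hf]] Hg]].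
  by exists (fun w => w *m M + v); [exists M, v | move=> x /Hg /eqP].
by exists M; apply/existsP; exists v; apply/forall_inP => x /Hg ->; rewrite Hf.
Qed.

Lemma nd_homP n B (A : {set 'rV[F]_n}) g :
  reflect [/\ affine_on B g, {in B, forall x, g x \in A}, {in B &, injective g} &
              exists2 h, is_affine h & {in B, cancel g h}]
          (nd_hom B A g).
Proof.
apply: (iffP and4P) => -[ag gA gI gV]; split=> //.
- by move=> x; apply: (forall_inP gA).
- move=> x y xB yB gxy; apply/eqP.
  by move/implyP: (forall_inP (forall_inP gI x xB) y yB); apply; apply/eqP.
- case/existsP: gV => M' /existsP[v' /forall_inP gV].
  by exists (fun w => w *m M' + v'); [exists M', v' | move=> x /gV /eqP].
- exact/forall_inP.
- apply/forall_inP => x xB; apply/forall_inP => y yB.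
  by apply/implyP => /eqP/(gI _ _ xB yB)->.
- case: gV => h [M' [v' Hh]] gK; apply/existsP; exists M'; apply/existsP; exists v'.
  by apply/forall_inP => x xB; rewrite -Hh gK.
Qed.

Lemma eq_in_nd_hom n B (A : {set 'rV[F]_n}) g h :
  {in B, g =1 h} -> nd_hom B A g -> nd_hom B A h.
Proof.
move=> gh /nd_homP[/affine_onP[f af gf] gA gI [k ak gK]]; apply/nd_homP; split.
- by apply/affine_onP; exists f => // x xB; rewrite -gh ?gf.
- by move=> x xB; rewrite -gh ?gA.
- by move=> x y xB yB; rewrite -!gh //; apply: gI.
- by exists k => // x xB; rewrite -gh ?gK.
Qed.

Lemma aff_indepP S : aff_indep S ->
  forall lam : {ffun 'rV[F]_m -> F}, \sum_(x in S) lam x = 0 ->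
  \sum_(x in S) lam x *: x = 0 -> {in S, forall x, lam x = 0}.
Proof.
move=> /forallP iS lam lam0 lamx0 x xS; apply/eqP.
by move/implyP: (iS lam); rewrite lam0 lamx0 !eqxx => /(_ isT)/forall_inP; apply.
Qed.

Definition in_aff_hull S b : Prop :=
  exists2 mu : {ffun 'rV[F]_m -> F},
    \sum_(s in S) mu s = 1 & b = \sum_(s in S) mu s *: s.

Lemma in_aff_hull_mem S b : b \in S -> in_aff_hull S b.
Proof.
move=> bS; exists [ffun x => (x == b)%:R].
  rewrite (bigD1 b) //= ffunE eqxx big1 ?addr0 // => x /andP[_ /negbTE].
  by rewrite ffunE => ->.
rewrite (bigD1 b) //= ffunE eqxx scale1r big1 ?addr0 // => x /andP[_ /negbTE].
by rewrite ffunE => ->; rewrite scale0r.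
Qed.

Lemma in_aff_hullU1 S b :
  aff_indep S -> b \notin S -> ~~ aff_indep (b |: S) -> in_aff_hull S b.
Proof.
move=> iS bNS /forallPn[lam]; rewrite negb_imply => /andP[/andP[/eqP]].
rewrite !big_setU1 //= => lam0 /eqP lamx0 /forall_inPn[x xbS lamx].
have lamb : lam b != 0.
  apply: contra lamx => /eqP lamb; move: lam0 lamx0 xbS.
  rewrite lamb add0r scale0r add0r => lam0 lamx0 /setU1P[->|xS].
    by rewrite lamb.
  by rewrite (aff_indepP iS lam0 lamx0).
have lamS : \sum_(x in S) lam x = - lam b by apply/eqP; rewrite -addr_eq0 addrC lam0.
have lamxS : \sum_(x in S) lam x *: x = - (lam b *: b).
  by apply/eqP; rewrite -addr_eq0 addrC lamx0.
exists [ffun x => - lam x / lam b].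
  under eq_bigr do rewrite ffunE.
  by rewrite -mulr_suml sumrN lamS opprK divff.
under eq_bigr do rewrite ffunE mulrC -scalerA scaleNr.
by rewrite -scaler_sumr sumrN lamxS opprK scalerA mulVf // scale1r.
Qed.

Lemma rank_aff_basis B :
  exists S, [/\ S \subset B, aff_indep S, #|S| = rank_aff B &
                {in B, forall b, in_aff_hull S b}].
Proof.
pose P := [pred S : {set 'rV[F]_m} | (S \subset B) && aff_indep S].
have P0 : P set0.
  rewrite /= sub0set; apply/forallP => lam; apply/implyP => _.
  by apply/forall_inP => x; rewrite inE.
have P_gt0 : (0 < #|P|)%N by apply/card_gt0P; exists set0.
have [S /andP[SB iS] rankE] := eq_bigmax_cond (fun S : {set _} => #|S|) P_gt0.
exists S; split=> // b bB.
have [bS|bNS] := boolP (b \in S); first exact: in_aff_hull_mem.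
apply: in_aff_hullU1 => //; apply/negP => ibS.
have : P (b |: S) by rewrite /= subUset sub1set bB SB ibS.
by move/(@leq_bigmax_cond _ P (fun S : {set _} => #|S|)); rewrite rankE cardsU1 bNS ltnn.
Qed.

End AffineIndependence.

Section DifferenceMatrix.
Variables (F : finFieldType) (m : nat) (B S : {set 'rV[F]_m}) (s0 : 'rV[F]_m).
Hypotheses (SB : S \subset B) (s0S : s0 \in S).

Definition diff_mx n (f : 'rV[F]_m -> 'rV[F]_n) : 'M[F]_(#|S :\ s0|, n) :=
  \matrix_i (f (enum_val i) - f s0).

Lemma row_diff_mx n (f : 'rV[F]_m -> 'rV[F]_n) s (sS : s \in S :\ s0) :
  row (enum_rank_in sS s) (diff_mx f) = f s - f s0.
Proof. by rewrite rowK enum_rankK_in. Qed.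

Lemma diff_mx_sub n (f : 'rV[F]_m -> 'rV[F]_n) s : s \in S -> (f s - f s0 <= diff_mx f)%MS.
Proof.
move=> sS; have [->|ne] := eqVneq s s0; first by rewrite subrr sub0mx.
have sS' : s \in S :\ s0 by rewrite in_setD1 ne.
by rewrite -(row_diff_mx f sS') row_sub.
Qed.

Lemma eq_diff_mx n (f g : 'rV[F]_m -> 'rV[F]_n) :
  diff_mx f = diff_mx g -> {in S, forall s, f s - f s0 = g s - g s0}.
Proof.
move=> fg s sS; have [->|ne] := eqVneq s s0; first by rewrite !subrr.
have sS' : s \in S :\ s0 by rewrite in_setD1 ne.
by rewrite -(row_diff_mx f sS') -(row_diff_mx g sS') fg.
Qed.

Lemma aff_indep_diff_free : aff_indep S -> row_free (diff_mx id).
Proof.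
move=> iS; apply: inj_row_free => v v0; apply/rowP => i; rewrite mxE.
have iS0 := enum_valP i.
(* [lam] turns the relation [v *m diff_mx id = 0] into an affine relation on [S]. *)
pose V := \sum_j v 0 j.
pose lam := [ffun x => if x \in S :\ s0 then v 0 (enum_rank_in iS0 x) else - V].
have sum_lam (W : nmodType) (h : F -> 'rV[F]_m -> W) :
    \sum_(x in S) h (lam x) x = h (- V) s0 + \sum_j h (v 0 j) (enum_val j).
  rewrite (big_setD1 s0) //= ffunE setD11 big_enum_val; congr (_ + _).
  by apply: eq_bigr => j _; rewrite ffunE enum_valP enum_valK_in.
have lam0 : \sum_(x in S) lam x = 0 by rewrite (sum_lam _ (fun a _ => a)) addNr.
have lamx0 : \sum_(x in S) lam x *: x = 0.
  rewrite (sum_lam _ (fun a x => a *: x)) -[RHS]v0 mulmx_sum_row scaleNr scaler_suml -sumrN.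
  rewrite addrC -big_split /=; apply: eq_bigr => j _.
  by rewrite rowK scalerBr.
have := aff_indepP iS lam0 lamx0 (subsetP (subD1set S s0) _ iS0).
by rewrite ffunE iS0 enum_valK_in.
Qed.

Lemma nd_hom_diff_free n (A : {set 'rV[F]_n}) g :
  aff_indep S -> nd_hom B A g -> row_free (diff_mx g).
Proof.
move=> iS /nd_homP[_ _ _ [h [M' [v' hE]] gK]].
have gM' : diff_mx g *m M' = diff_mx id.
  apply/row_matrixP => i; rewrite row_mul !rowK mulmxBl.
  have gS x : x \in S -> g x *m M' = x - v'.
    by move=> xS; have := gK x (subsetP SB _ xS); rewrite hE => {2}<-; rewrite addrK.
  have /setD1P[_ iS0] := enum_valP i.
  by rewrite !gS // opprB addrA subrK.
rewrite /row_free eqn_leq rank_leq_row -{1}(eqP (aff_indep_diff_free iS)) -gM'.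
exact: mxrankM_maxl.
Qed.

Hypothesis hullB : {in B, forall b, in_aff_hull S b}.

Lemma diff_mx_span n (g : 'rV[F]_m -> 'rV[F]_n) :
  affine_on B g -> {in B, forall b, (g b - g s0 <= diff_mx g)%MS}.
Proof.
move=> /affine_onP[f af gf] b bB; have [mu mu1 bE] := hullB bB.
have gfS x : x \in S -> g x = f x by move=> xS; rewrite gf ?(subsetP SB).
rewrite gf // gfS // bE (affine_comb _ af mu1).
rewrite -[f s0]scale1r -mu1 scaler_suml -sumrB.
apply: summx_sub => s sS; rewrite -scalerBr -!gfS //.
exact/scalemx_sub/diff_mx_sub.
Qed.

Lemma affine_on_translate n (g g' : 'rV[F]_m -> 'rV[F]_n) :
  affine_on B g -> affine_on B g' -> diff_mx g = diff_mx g' ->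
  {in B, forall b, g b = g' b + (g s0 - g' s0)}.
Proof.
move=> /affine_onP[f af gf] /affine_onP[f' af' gf'] /eq_diff_mx gg' b bB.
have [mu mu1 bE] := hullB bB.
have fS x : x \in S -> g x = f x /\ g' x = f' x.
  by move=> xS; rewrite gf ?gf' ?(subsetP SB).
have [-> ->] := fS _ s0S; rewrite gf // gf' // bE.
rewrite (affine_comb _ af mu1) (affine_comb _ af' mu1).
rewrite -[X in _ + X]scale1r -mu1 scaler_suml -big_split /=.
apply: eq_bigr => s sS; rewrite -scalerDr; congr (_ *: _).
have := gg' s sS; have [-> ->] := fS _ sS; have [-> ->] := fS _ s0S.
by move/(canRL (subrK _)) => ->; rewrite addrAC -addrA.
Qed.

End DifferenceMatrix.

Lemma row_free_completion (F : fieldType) p d n (K : 'M[F]_(p, n)) :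
  row_free K -> (p + d = n)%N ->
  exists L : 'M[F]_(d, n), row_free (col_mx K L) /\ row_full (col_mx K L).
Proof.
move=> freeK pdn.
have rankC : \rank (K^C)%MS = d by rewrite mxrank_compl (eqP freeK) -pdn addKn.
suff [L fullKL] : exists L : 'M[F]_(d, n), row_full (col_mx K L).
  by exists L; split=> //; rewrite /row_free (eqP fullKL) pdn.
case: d / rankC {pdn}; exists (row_base (K^C)%MS).
rewrite -(eq_row_full (addsmxE _ _)).
rewrite (eq_row_full (adds_eqmx (eqmx_refl K) (eq_row_base _))).
exact: addsmx_compl_full.
Qed.

Lemma card_le_slices (F : finFieldType) p d n (K : 'M[F]_(p, n)) (L : 'M[F]_(d, n))
    (T : {set 'rV[F]_n}) e :
  row_full (col_mx K L) ->
  (forall a : 'rV[F]_p, #|[set u : 'rV[F]_d | (a *m K + u *m L)%R \in T]| <= e)%N ->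
  (#|T| <= #|F| ^ p * e)%N.
Proof.
move=> /row_fullP[Q QKL] sliceT.
pose P := [set au : 'rV[F]_p * 'rV[F]_d | au.1 *m K + au.2 *m L \in T].
have TP : T \subset [set au.1 *m K + au.2 *m L | au in P].
  apply/subsetP => t tT; apply/imsetP; exists (lsubmx (t *m Q), rsubmx (t *m Q)) => /=.
    by rewrite inE /= -mul_row_col hsubmxK -mulmxA QKL mulmx1.
  by rewrite -mul_row_col hsubmxK -mulmxA QKL mulmx1.
apply: leq_trans (subset_leq_card TP) _; apply: leq_trans (leq_imset_card _ _) _.
have card_sum (I : finType) (A : {set I}) : #|A| = (\sum_i (i \in A : nat))%N.
  by rewrite -sum1_card big_mkcond; apply: eq_bigr => i _; case: (i \in A).
rewrite card_sum (eq_bigr (fun au => (au.1 *m K + au.2 *m L \in T : nat))).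
  2: by move=> au _; rewrite inE.
rewrite -(pair_bigA _ (fun a u => (a *m K + u *m L \in T : nat))) /=.
have -> : (#|F| ^ p = #|{: 'rV[F]_p}|)%N by rewrite card_mx mul1n.
rewrite -sum_nat_const; apply: leq_sum => a _.
by apply: leq_trans (sliceT a); rewrite card_sum; apply/eq_leq/eq_bigr => u _; rewrite inE.
Qed.

Definition translates (F : finFieldType) m n (B : {set 'rV[F]_m}) (A : {set 'rV[F]_n})
    (f : 'rV[F]_m -> 'rV[F]_n) : {set 'rV[F]_n} :=
  [set t | [forall b in B, f b + t \in A]].

Section ProductCopy.
Variables (F : finFieldType) (m n p d k : nat).
Variables (B : {set 'rV[F]_m}) (C : {set 'rV[F]_k}) (A : {set 'rV[F]_n}).
Variables (K : 'M[F]_(p, n)) (L : 'M[F]_(d, n)) (c : 'rV[F]_n) (s0 : 'rV[F]_m).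
Variables (f : 'rV[F]_m -> 'rV[F]_n) (g : 'rV[F]_k -> 'rV[F]_d).
Hypotheses (freeKL : row_free (col_mx K L))
           (fK_span : {in B, forall b, (f b - f s0 <= K)%MS}).
Hypotheses (fhom : nd_hom B A f)
           (ghom : nd_hom C [set u | c + u *m L \in translates B A f] g).

Definition prod_map (z : 'rV[F]_(m + k)) := f (lsubmx z) + (c + g (rsubmx z) *m L).

Lemma prod_map_row x y : prod_map (row_mx x y) = f x + (c + g y *m L).
Proof. by rewrite /prod_map row_mxKl row_mxKr. Qed.

Lemma prod_setP (P : 'rV[F]_(m + k) -> Prop) :
  (forall x y, x \in B -> y \in C -> P (row_mx x y)) -> {in prod_set B C, forall z, P z}.
Proof. by move=> PBC z /imset2P[x y xB yC ->]; apply: PBC. Qed.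

Lemma prod_map_affine : affine_on (prod_set B C) prod_map.
Proof.
have /nd_homP[/affine_onP[f' af' ff'] _ _ _] := fhom.
have /nd_homP[/affine_onP[g' ag' gg'] _ _ _] := ghom.
apply/affine_onP; exists (fun z => f' (lsubmx z) + (c + g' (rsubmx z) *m L)).
  apply: affineD; first exact: affine_comp (affine_lsubmx _ _ _) af'.
  apply: affineD; first exact: affine_cst.
  exact/affineMr/(affine_comp (affine_rsubmx _ _ _) ag').
by apply: prod_setP => x y xB yC; rewrite prod_map_row !row_mxKl !row_mxKr ff' ?gg'.
Qed.

Lemma prod_map_image : {in prod_set B C, forall z, prod_map z \in A}.
Proof.
have /nd_homP[_ gC _ _] := ghom.
apply: prod_setP => x y xB yC; rewrite prod_map_row.
by have := gC y yC; rewrite !inE => /forall_inP; apply.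
Qed.

Lemma prod_map_inverse : exists2 h, is_affine h & {in prod_set B C, cancel prod_map h}.
Proof.
have /nd_homP[_ _ _ [f' af' fK']] := fhom.
have /nd_homP[_ _ _ [g' ag' gK']] := ghom.
have [Q KLQ] := row_freeP freeKL.
(* [u] reads [g y] off [f x + (c + g y *m L)], as [f x - f s0] lies in the row space of [K]. *)
pose u w := (w - (f s0 + c)) *m rsubmx Q.
have uE x y : x \in B -> u (f x + (c + g y *m L)) = g y.
  move=> xB; have [a aK] := submxP (fK_span xB).
  rewrite /u (addrC (f s0)) addrCA opprD addrACA subrr add0r addrAC aK -mul_row_col.
  by rewrite mulmx_rsub -mulmxA KLQ mulmx1 row_mxKr.
have au : is_affine u by apply/affineMr/affineD; [exact: affine_id | exact: affine_cst].
exists (fun w => row_mx (f' (w - c - u w *m L)) (g' (u w))).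
  apply: affine_row_mx; last exact: affine_comp au ag'.
  apply: affine_comp af'; apply: affineD; last exact/affineN/affineMr.
  by apply: affineD; [exact: affine_id | exact: affine_cst].
apply: prod_setP => x y xB yC; rewrite prod_map_row uE //.
by rewrite addrA addrAC !addrK fK' ?gK'.
Qed.

Lemma nd_hom_prod_map : nd_hom (prod_set B C) A prod_map.
Proof.
have [h ah hK] := prod_map_inverse.
apply/nd_homP; split; [exact: prod_map_affine | exact: prod_map_image | | by exists h].
exact: can_in_inj hK.
Qed.

End ProductCopy.

Definition nd_homs (F : finFieldType) m n (B : {set 'rV[F]_m}) (A : {set 'rV[F]_n}) :=
  [set g : {ffun 'rV[F]_m -> 'rV[F]_n} | [forall x in ~: B, g x == 0] && nd_hom B A g].

Section Counting.
Variables (F : finFieldType) (m n d : nat) (B S : {set 'rV[F]_m}) (s0 : 'rV[F]_m).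
Variables (A : {set 'rV[F]_n}) (Fam : config F -> Prop) (e : nat).
Hypotheses (SB : S \subset B) (iS : aff_indep S) (s0S : s0 \in S)
           (hullB : {in B, forall b, in_aff_hull S b}).
Hypotheses (freeA : fam_free (prod_family B Fam) A)
           (maxFam : forall A' : {set 'rV[F]_d}, fam_free Fam A' -> (#|A'| <= e)%N)
           (dimE : (#|S :\ s0| + d)%N = n).

Lemma card_translates_le g :
  nd_hom B A g -> (#|translates B A g| <= #|F| ^ #|S :\ s0| * e)%N.
Proof.
move=> ghom; set K := diff_mx S s0 g.
have [L [freeKL fullKL]] := row_free_completion (nd_hom_diff_free SB s0S iS ghom) dimE.
apply: (card_le_slices fullKL) => a; apply: maxFam => -[k C] FamC /=.
apply/negP => /existsP[h hhom].
have /negP := freeA (ex_intro _ _ (conj FamC erefl)); apply; apply/existsP.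
exists [ffun z => prod_map L (a *m K) g h z].
apply: (eq_in_nd_hom (g := prod_map L (a *m K) g h)) => [z _|]; first by rewrite ffunE.
have ag : affine_on B g by case/nd_homP: ghom.
exact: nd_hom_prod_map freeKL (diff_mx_span SB s0S hullB ag) ghom hhom.
Qed.

Lemma card_nd_hom_fiber_le (D : 'M[F]_(#|S :\ s0|, n)) :
  (#|[set g in nd_homs B A | diff_mx S s0 g == D]| <= #|F| ^ #|S :\ s0| * e)%N.
Proof.
set G := [set g in _ | _]; have [->|[g1 g1G]] := set_0Vmem G; first by rewrite cards0.
have homs g : g \in G -> [/\ {in ~: B, forall x, g x = 0}, nd_hom B A g & diff_mx S s0 g = D].
  by rewrite !inE => /andP[/andP[/forall_inP g0 ghom] /eqP gD]; split=> // x /g0/eqP.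
have [_ g1hom g1D] := homs g1 g1G.
have g1a : affine_on B g1 by case/nd_homP: g1hom.
have gE g : g \in G -> {in B, forall b, g b = g1 b + (g s0 - g1 s0)}.
  case/homs => _ ghom gD; have ga : affine_on B g by case/nd_homP: ghom.
  by apply: (affine_on_translate SB s0S hullB) => //; rewrite gD g1D.
have shift_inj : {in G &, injective (fun g : {ffun _} => g s0 - g1 s0)}.
  move=> g h gG hG /= gh; apply/ffunP => x.
  have [xB|xNB] := boolP (x \in B); first by rewrite (gE g) // (gE h) // gh.
  by have [g0 _ _] := homs g gG; have [h0 _ _] := homs h hG; rewrite g0 ?h0 ?inE.
apply: leq_trans (card_translates_le g1hom); rewrite -(card_in_imset shift_inj).
apply/subset_leq_card/subsetP => _ /imsetP[g gG ->]; rewrite inE.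
have [_ /nd_homP[_ gA _ _] _] := homs g gG.
by apply/forall_inP => b bB; rewrite -gE ?gA.
Qed.

Lemma nd_count_le :
  (nd_count B A <= #|F| ^ (#|S :\ s0| * n) * (#|F| ^ #|S :\ s0| * e))%N.
Proof.
rewrite /nd_count -/(nd_homs B A) -sum1_card.
rewrite (partition_big (fun g : {ffun _} => diff_mx S s0 g) predT) //=.
rewrite -card_mx -sum_nat_const; apply: leq_sum => D _.
apply: leq_trans (card_nd_hom_fiber_le D).
by rewrite -sum1_card; apply/eq_leq/eq_bigl => g; rewrite inE.
Qed.

End Counting.

Theorem lemma4p1 (F : finFieldType) (m : nat) (B : {set 'rV[F]_m})
  (Fam : config F -> Prop) (n e1 e2 : nat) :
  (1 <= rank_aff B)%N ->
  (rank_aff B <= n)%N ->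
  is_ex_aff n (prod_family B Fam) e1 ->
  is_ex_aff (n - rank_aff B + 1) Fam e2 ->
  (c_min B n e1 <=
     #|F| ^ (rank_aff B - 1) * (#|F| ^ n) ^ (rank_aff B - 1) * e2)%N.
Proof.
move=> r_gt0 r_le_n [[A [freeA <-]] _] [_ maxFam].
have [S [SB iS cardS hullB]] := rank_aff_basis B.
have [s0 s0S] : exists s0, s0 \in S by apply/set0Pn; rewrite -card_gt0 cardS.
have cardS0 : #|S :\ s0| = (rank_aff B - 1)%N.
  by rewrite -cardS (cardsD1 s0 S) s0S add1n subn1.
have dimE : (#|S :\ s0| + (n - rank_aff B + 1))%N = n by rewrite cardS0; lia.
apply: leq_trans (c_min_le B A) _.
apply: leq_trans (nd_count_le SB iS s0S hullB freeA maxFam dimE) _.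
by rewrite cardS0 -expnM (mulnC n) mulnCA mulnA.
Qed.
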